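(* Suppose the digraph $\mathcal{G}=(\mathcal{V},\mathcal{E})$ is strongly connected. Then each of the four matrices $$\sum_{(j,i)\in\mathcal{E}}p_{ij}(I-L_{ji})\otimes(I-L_{ji}),\quad \sum_{(j,i)\in\mathcal{E}}p_{ij}(I-L_{ji})\otimes S_{ji},\quad \sum_{(j,i)\in\mathcal{E}}p_{ij}S_{ji}\otimes(I-L_{ji}),\quad \sum_{(j,i)\in\mathcal{E}}p_{ij}S_{ji}\otimes S_{ji}$$ has $1$ as a simple eigenvalue, and all of its other eigenvalues have modulus strictly smaller than one.
   Context: Setting: $\mathcal{V}=\{1,\dots,n\}$, $n>1$, and $\mathcal{G}$ has no selfloops. To each edge $(j,i)\in\mathcal{E}$ are assigned $p_{ij}\in(0,1)$, with $\sum_{(j,i)\in\mathcal{E}}p_{ij}=1$, and $w_{ij}\in(0,1)$. Notation: $f_i$ is the $i$-th standard basis vector of $\mathbb{R}^n$ and $\otimes$ is the Kronecker product. For each edge $(j,i)$, $L_{ji}=w_{ij}f_if_i^T-w_{ij}f_if_j^T$ and $S_{ji}=I-(f_j-f_i)f_j^T$. *)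

From HB Require Import structures.
From mathcomp Require Import all_boot all_order all_algebra.
From mathcomp Require Import complex mxtens.
Set Implicit Arguments. Unset Strict Implicit. Unset Printing Implicit Defensive.
Import Order.TTheory GRing.Theory Num.Theory.
Local Open Scope ring_scope.

(* L_{ji} = w_ij f_i f_i^T - w_ij f_i f_j^T   (edge (j,i)) *)
Definition Lmx (R : pzRingType) (n : nat) (w : 'I_n -> 'I_n -> R) (j i : 'I_n)
  : 'M[R]_n := w i j *: delta_mx i i - w i j *: delta_mx i j.

(* S_{ji} = I - (f_j - f_i) f_j^T *)
Definition Smx (R : pzRingType) (n : nat) (j i : 'I_n) : 'M[R]_n :=
  1%:M - (delta_mx j j - delta_mx i j).

(* strong connectivity of the digraph with edge relation E (E j i <-> (j,i) in E) *)
Definition strongly_connected (n : nat) (E : rel 'I_n) : Prop :=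
  forall u v : 'I_n, connect E u v.

Definition cmx (R : rcfType) (m : nat) (A : 'M[R]_m) : 'M[R[i]]_m :=
  map_mx (fun x => x%:C%C) A.

Definition one_simple_dominant (R : rcfType) (m : nat) (A : 'M[R]_m) : Prop :=
  eigenvalue (cmx A) 1 /\ mup 1 (char_poly (cmx A)) = 1%N /\
  (forall lambda : R[i], eigenvalue (cmx A) lambda -> lambda != 1 -> `|lambda| < 1).

From HB Require Import structures.
From mathcomp Require Import all_boot all_order all_algebra.
From mathcomp Require Import fingroup perm complex mxtens.
Import Order.TTheory GRing.Theory Num.Theory.
Set Implicit Arguments. Unset Strict Implicit. Unset Printing Implicit Defensive.
Local Open Scope ring_scope.

(* Each of the four matrices M is nonnegative, has a positive diagonal entry, inherits
   an irreducible sign pattern from the strong connectivity of the digraph, and fixes a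
   positive vector v: v = 1 (x) 1 for the factors I - L_ji (whose rows sum to 1), and
   v = pi (x) 1 for S_ji (x) (I - L_ji), where pi is the Perron vector of the
   column-stochastic matrix sum p_ij S_ji. Conjugating by diag v turns M into an
   irreducible row-stochastic matrix with a positive diagonal entry. For such a matrix
   the maximum principle shows that its fixed vectors are constant, that no Jordan
   chain sits above them (so 1 is simple), and that an eigenvalue of modulus one must
   be 1 (equality in the triangle inequality at the positive diagonal entry). The
   factor (I - L_ji) (x) S_ji reduces to S_ji (x) (I - L_ji) by swapping the tensor
   factors, and S_ji (x) S_ji is handled through its transpose, which fixes 1 (x) 1. *)

Lemma connect_preserves (T : finType) (e : rel T) (a : pred T) :
  (forall x y, e x y -> a x -> a y) -> forall x y, connect e x y -> a x -> a y.
Proof.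
move=> a_e x y /connectP[q q_path ->{y}].
by elim: q x q_path => //= z q IHq x /andP[e_xz q_path] ax; apply: IHq (a_e _ _ e_xz ax).
Qed.

(* A pair [(a, b)] first moves its first coordinate along [e] to [b], then runs
   along the diagonal to [(t, t)]; moves off a pair [(x, b)] only need [x != b]. *)
Lemma connect_pairs (T U : finType) (e : rel T) (K : rel U) (pr : T -> T -> U) (t : T) :
  (forall x y, connect e x y) ->
  (forall x y b, e x y -> x != b -> K (pr x b) (pr y b)) ->
  (forall x y, e x y -> K (pr x x) (pr y y)) ->
  forall a b, connect K (pr a b) (pr t t).
Proof.
move=> e_conn K_move K_diag a b.
have to_diag : connect K (pr a b) (pr b b).
  pose reach z := connect K (pr z b) (pr b b).
  have reach_back x y : [rel x y | e y x] x y -> reach x -> reach y.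
    move=> /= e_yx reach_x; have [->|y_b] := eqVneq y b; first exact: connect0.
    exact: connect_trans (connect1 (K_move _ _ _ e_yx y_b)) reach_x.
  apply: (connect_preserves reach_back (y := a) _ (connect0 _ _)).
  exact: etrans (connect_rev e b a) (e_conn a b).
apply: connect_trans to_diag _.
pose diag_reach z := connect K (pr b b) (pr z z).
have diag_step x y : e x y -> diag_reach x -> diag_reach y.
  by move=> e_xy reach_x; apply: connect_trans reach_x (connect1 (K_diag _ _ e_xy)).
exact: connect_preserves diag_step _ _ (e_conn b t) (connect0 _ _).
Qed.

Lemma exists_argmax (R : realDomainType) (I : finType) (i0 : I) (f : I -> R) :
  exists k, forall l, f l <= f k.
Proof.
by case: (@arg_maxP _ R I i0 xpredT f isT) => k _ k_max; exists k => l; apply: k_max.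
Qed.

Lemma weighted_avg_max (R : numDomainType) (I : finType) (q f : I -> R) (m : R) :
  (forall l, 0 <= q l) -> \sum_l q l = 1 -> (forall l, f l <= m) ->
  m <= \sum_l q l * f l -> forall j, 0 < q j -> f j = m.
Proof.
move=> q_ge0 q_sum1 f_le m_le j q_gt0.
have gap_ge0 l : true -> 0 <= q l * (m - f l) by rewrite mulr_ge0 ?subr_ge0.
have gap0 : \sum_l q l * (m - f l) = 0.
  apply/eqP; rewrite eq_le sumr_ge0 // andbT.
  rewrite (eq_bigr (fun l => q l * m - q l * f l)) => [|l _]; last by rewrite mulrBr.
  by rewrite sumrB -mulr_suml q_sum1 mul1r subr_le0.
move: (psumr_eq0P gap_ge0 gap0 (i := j) isT) => /eqP.
by rewrite mulf_eq0 gt_eqF //= subr_eq0 => /eqP.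
Qed.

(** * Irreducible stochastic matrices *)

Definition mxpos_rel (R : numDomainType) (n : nat) (A : 'M[R]_n) : rel 'I_n :=
  fun a b => 0 < A a b.

Section RowStochastic.

Variables (R : realFieldType) (N : nat) (P : 'M[R]_N).
Hypotheses (P_ge0 : forall i j, 0 <= P i j) (P_row1 : forall i, \sum_j P i j = 1).

Lemma stoch_mul_ones : P *m const_mx 1 = const_mx 1 :> 'cV_N.
Proof.
by apply/colP => i; rewrite !mxE -[RHS](P_row1 i); apply: eq_bigr => j _; rewrite mxE mulr1.
Qed.

Lemma stoch_fixed_argmax (y : 'cV[R]_N) (k s : 'I_N) :
  P *m y = y -> (forall l, y l 0 <= y k 0) -> connect (mxpos_rel P) k s ->
  y s 0 = y k 0.
Proof.
move=> Py k_max k_s; apply/eqP.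
apply: (connect_preserves (a := fun z => y z 0 == y k 0)) k_s (eqxx _) => i j P_ij /eqP y_i.
apply/eqP; apply: (weighted_avg_max (q := P i) (f := fun l => y l 0)) => //.
by have := congr1 (fun v : 'cV_N => v i 0) Py; rewrite mxE y_i => ->.
Qed.

Variable s : 'I_N.

Lemma stoch_fixed_const : (forall k, connect (mxpos_rel P) k s) ->
  forall y : 'cV[R]_N, P *m y = y -> forall i, y i 0 = y s 0.
Proof.
move=> P_conn y Py i.
have [k k_max] := exists_argmax s (fun l => y l 0).
have [k' k'_min] := exists_argmax s (fun l => - y l 0).
have y_s_max := stoch_fixed_argmax Py k_max (P_conn k).
have Pny : P *m - y = - y by rewrite mulmxN Py.
have k'_max : forall l, (- y) l 0 <= (- y) k' 0 by move=> l; rewrite !mxE.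
have := stoch_fixed_argmax Pny k'_max (P_conn k').
rewrite !mxE => /eqP; rewrite eqr_opp => /eqP y_s_min.
apply/eqP; rewrite eq_le {1}y_s_max k_max /= y_s_min -lerN2.
exact: k'_min.
Qed.

(* No Jordan chain grows out of the constant vector: [P x = x + c 1] forces [c = 0],
   as one sees at a maximum of [x] (for [c <= 0]) and of [-x] (for [c >= 0]). *)
Lemma stoch_drift0 (x : 'cV[R]_N) (c : R) : P *m x = x + c *: const_mx 1 -> c = 0.
Proof.
have drift_le0 (x' : 'cV[R]_N) c' : P *m x' = x' + c' *: const_mx 1 -> c' <= 0.
  move=> Px'; have [k k_max] := exists_argmax s (fun l => x' l 0).
  have := congr1 (fun v : 'cV_N => v k 0) Px'; rewrite !mxE mulr1 => Px'_k.
  rewrite -(lerD2l (x' k 0)) addr0 -Px'_k -[leRHS]mul1r -(P_row1 k) mulr_suml.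
  by apply: ler_sum => j _; rewrite ler_wpM2l.
move=> Px; apply/eqP; rewrite eq_le (drift_le0 x) //= -oppr_le0 (drift_le0 (- x)) //.
by rewrite mulmxN Px opprD scaleNr.
Qed.

End RowStochastic.

Lemma char_poly_trmx (R : comNzRingType) (n : nat) (A : 'M[R]_n) :
  char_poly A^T = char_poly A.
Proof.
rewrite /char_poly -det_tr; congr (\det _).
by apply/matrixP => i j; rewrite !mxE eq_sym.
Qed.

Lemma char_poly_conj (R : fieldType) (n : nat) (V A : 'M[R]_n) : V \in unitmx ->
  char_poly (invmx V *m A *m V) = char_poly A.
Proof.
move=> V_unit; rewrite /char_poly /char_poly_mx.
pose C (M : 'M[R]_n) := map_mx (@polyC R) M.
have CVV : C (invmx V) *m C V = 1 by rewrite -map_mxM mulVmx // map_mx1.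
have -> : 'X%:M - C (invmx V *m A *m V) = C (invmx V) *m ('X%:M - C A) *m C V.
  rewrite /C in CVV *.
  by rewrite !map_mxM mulmxBr mulmxBl mul_mx_scalar -scalemxAl CVV scalemx1.
by rewrite !det_mulmx mulrC mulrA -det_mulmx /C -map_mxM mulmxV // map_mx1 det1 mul1r.
Qed.

Lemma char_poly_ublock (R : comNzRingType) (m n : nat)
    (A : 'M[R]_m) (B : 'M[R]_(m, n)) (D : 'M[R]_n) :
  char_poly (block_mx A B 0 D) = char_poly A * char_poly D.
Proof.
rewrite /char_poly /char_poly_mx map_block_mx /= map_mx0 scalar_mx_block.
by rewrite opp_block_mx add_block_mx oppr0 !add0r det_ublock.
Qed.

Definition ones_basis (R : pzRingType) (N : nat) : 'M[R]_(1 + N) :=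
  \matrix_(i, j) ((j == ord0) || (i == j))%:R.

Lemma ones_basis_unit (R : comUnitRingType) (N : nat) : ones_basis R N \in unitmx.
Proof.
have trig : is_trig_mx (ones_basis R N).
  apply/is_trig_mxP => i j ij; rewrite mxE -[i == j]val_eqE /= (ltn_eqF ij) orbF.
  suff /negbTE -> : j != ord0 by [].
  by rewrite -val_eqE /= -lt0n (leq_ltn_trans _ ij).
rewrite unitmxE det_trig // (eq_bigr (fun _ => 1)) => [|i _].
  by rewrite big1_eq unitr1.
by rewrite mxE eqxx orbT.
Qed.

Lemma ones_basis_first (R : pzRingType) (N : nat) :
  ones_basis R N *m col_mx 1%:M 0 = const_mx 1.
Proof.
apply/colP => i; rewrite !mxE big_split_ord /= big_ord1 big1 => [|j _].
  by rewrite col_mxEu !mxE mulr1 addr0.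
by rewrite col_mxEd !mxE mulr0.
Qed.

Lemma block_of_fixed_first (R : pzRingType) (N : nat) (B : 'M[R]_(1 + N)) :
  B *m col_mx 1%:M 0 = col_mx 1%:M 0 ->
  B = block_mx 1%:M (ursubmx B) 0 (drsubmx B).
Proof.
rewrite -{1}(submxK B) mul_block_col !mulmx1 !mulmx0 !addr0.
by case/eq_col_mx => ul1 dl0; rewrite -{1}(submxK B) ul1 dl0.
Qed.

(* Conjugating by [ones_basis] puts [P] in block upper triangular form with a [1] in
   the corner; a fixed point of the lower block would yield, through [stoch_drift0]
   and [stoch_fixed_const], a non-constant fixed vector of [P]. *)
Lemma stoch_char_poly_factor (R : realFieldType) (N : nat) (P : 'M[R]_(1 + N))
    (s : 'I_(1 + N)) :
  (forall i j, 0 <= P i j) -> (forall i, \sum_j P i j = 1) ->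
  (forall k, connect (mxpos_rel P) k s) ->
  exists2 q : {poly R}, char_poly P = ('X - 1) * q & ~~ root q 1.
Proof.
move=> P_ge0 P_row1 P_conn.
set T := ones_basis R N; set e0 : 'cV[R]_(1 + N) := col_mx 1%:M 0.
have T_unit : T \in unitmx := ones_basis_unit R N.
pose B := invmx T *m P *m T.
have TB : T *m B = P *m T by rewrite /B !mulmxA mulmxV // mul1mx.
have Be0 : B *m e0 = e0.
  rewrite /B -mulmxA ones_basis_first -mulmxA stoch_mul_ones //.
  by rewrite -ones_basis_first mulKmx.
have B_block := block_of_fixed_first Be0.
set U := ursubmx B in B_block; set D := drsubmx B in B_block.
exists (char_poly D).
  rewrite -(char_poly_conj P T_unit) -/B B_block char_poly_ublock.
  by rewrite /char_poly /char_poly_mx det_mx11 !mxE /= mulr1n.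
rewrite -char_poly_trmx -eigenvalue_root_char; apply/negP => /eigenvalueP[y yD y_neq0].
have Dy : D *m y^T = y^T by rewrite -[D]trmxK -trmx_mul yD scale1r.
pose c := (U *m y^T) 0 0.
have Bz : B *m col_mx 0 y^T = col_mx 0 y^T + c *: e0.
  rewrite B_block mul_block_col !mulmx0 !add0r Dy /e0 scale_col_mx scaler0.
  by rewrite add_col_mx addr0 add0r scalemx1 [U *m y^T]mx11_scalar.
pose x := T *m col_mx 0 y^T.
have Px : P *m x = x + c *: const_mx 1.
  by rewrite /x mulmxA -TB -mulmxA Bz mulmxDr -scalemxAr ones_basis_first.
have c0 := stoch_drift0 P_ge0 P_row1 s Px.
rewrite c0 scale0r addr0 in Px.
have x_const := stoch_fixed_const P_ge0 P_row1 P_conn Px.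
have : x = T *m (x s 0 *: e0).
  rewrite -scalemxAr ones_basis_first; apply/colP => i.
  by rewrite [RHS]mxE [const_mx _ _ _]mxE mulr1 x_const.
move/(congr1 (mulmx (invmx T))); rewrite !mulKmx // /e0 scale_col_mx scaler0.
case/eq_col_mx => _ /(congr1 trmx); rewrite trmxK trmx0 => y0.
by rewrite y0 eqxx in y_neq0.
Qed.

Lemma norm_argmax (R : rcfType) (I : finType) (i0 : I) (u : I -> R[i]) :
  exists k, forall j, `|u j| <= `|u k|.
Proof.
have [k k_max] := exists_argmax i0 (fun j => complex.Re `|u j|).
exists k => j; rewrite -[`|u j|]RRe_real ?normr_real // -[`|u k|]RRe_real ?normr_real //.
by rewrite lecR.
Qed.

Section StochasticSpectrum.

Variables (R : rcfType) (N : nat) (P : 'M[R]_N).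
Hypotheses (P_ge0 : forall i j, 0 <= P i j) (P_row1 : forall i, \sum_j P i j = 1).
Variables (l : R[i]) (u : 'I_N -> R[i]) (k0 : 'I_N).
Hypotheses (u_eigen : forall k, \sum_j (P k j)%:C%C * u j = l * u k)
  (k0_max : forall j, `|u j| <= `|u k0|) (u_k0 : u k0 != 0).

Local Notation Pc k j := ((P k j)%:C%C : R[i]).

Let Pc_ge0 k j : 0 <= Pc k j. Proof. by rewrite ler0c. Qed.

Let Pc_row1 k : \sum_j Pc k j = 1. Proof. by rewrite -rmorph_sum P_row1. Qed.

Let eigen_norm_le k : `|l| * `|u k| <= \sum_j Pc k j * `|u j|.
Proof.
rewrite -normrM -u_eigen (le_trans (ler_norm_sum _ _ _)) //.
by apply: ler_sum => j _; rewrite normrM ger0_norm.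
Qed.

Let avg_norm_le_max k : \sum_j Pc k j * `|u j| <= `|u k0|.
Proof.
rewrite -[leRHS]mul1r -(Pc_row1 k) mulr_suml.
by apply: ler_sum => j _; rewrite ler_wpM2l.
Qed.

Lemma stoch_eigen_norm_le1 : `|l| <= 1.
Proof.
have u_k0_gt0 : 0 < `|u k0| by rewrite normr_gt0.
by rewrite -(ler_pM2r u_k0_gt0) mul1r (le_trans (eigen_norm_le k0)).
Qed.

Variable s : 'I_N.
Hypotheses (P_conn : forall k, connect (mxpos_rel P) k s) (P_ss : 0 < P s s).

(* If [|l| = 1], [|u|] stays maximal along the paths to [s]; at [s] the triangle
   inequality in the eigen-equation is an equality, so its terms share a phase, and
   the positive weight [P s s] then forces [l = 1]. *)
Lemma stoch_eigen_norm1 : `|l| = 1 -> l = 1.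
Proof.
move=> l_1; set m := `|u k0|.
have u_s : `|u s| = m.
  apply/eqP; apply: (connect_preserves (a := fun z => `|u z| == m)) (P_conn k0) (eqxx _).
  move=> i j P_ij /eqP u_i; apply/eqP.
  apply: (weighted_avg_max (q := fun j => Pc i j) (f := fun j => `|u j|)) => //.
    by rewrite -u_i -[leLHS]mul1r -l_1 eigen_norm_le.
  by rewrite ltcR.
have avg_s : \sum_j `|Pc s j * u j| = m.
  have -> : \sum_j `|Pc s j * u j| = \sum_j Pc s j * `|u j|.
    by apply: eq_bigr => j _; rewrite normrM ger0_norm.
  apply/eqP; rewrite eq_le avg_norm_le_max /= -{1}u_s -[leLHS]mul1r -l_1.
  exact: eigen_norm_le.
have norm_eq : `|\sum_j Pc s j * u j| = \sum_j `|Pc s j * u j|.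
  by rewrite u_eigen normrM l_1 mul1r u_s avg_s.
have [t _ phase] := normC_sum_eq norm_eq.
have u_s_phase : u s = m * t.
  have Pc_ss : Pc s s != 0 by rewrite gt_eqF // ltcR.
  have := phase s isT; rewrite normrM ger0_norm // u_s -mulrA.
  by move/(mulfI Pc_ss).
have : l * u s = u s by rewrite -u_eigen (eq_bigr _ phase) -mulr_suml avg_s u_s_phase.
move/eqP; rewrite -subr_eq0 -{2}[u s]mul1r -mulrBl mulf_eq0 subr_eq0.
by rewrite -normr_eq0 u_s normr_eq0 (negPf u_k0) orbF => /eqP.
Qed.

End StochasticSpectrum.

Lemma stoch_root_lt1 (R : rcfType) (N : nat) (P : 'M[R]_N) (s : 'I_N) :
  (forall i j, 0 <= P i j) -> (forall i, \sum_j P i j = 1) -> 0 < P s s ->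
  (forall k, connect (mxpos_rel P) k s) ->
  forall l : R[i], root (char_poly (cmx P)) l -> l != 1 -> `|l| < 1.
Proof.
move=> P_ge0 P_row1 P_ss P_conn l; rewrite -char_poly_trmx -eigenvalue_root_char.
case/eigenvalueP => v vP v_neq0 l_neq1.
pose u j := v 0 j.
have u_eigen k : \sum_j (P k j)%:C%C * u j = l * u k.
  have := congr1 (fun w : 'rV_N => w 0 k) vP; rewrite !mxE => <-.
  by apply: eq_bigr => j _; rewrite !mxE mulrC.
have [k0 k0_max] := norm_argmax s u.
have u_k0 : u k0 != 0.
  apply: contra v_neq0 => /eqP u_k0; apply/eqP/rowP => j; rewrite mxE.
  by apply/eqP; rewrite -normr_le0 (le_trans (k0_max j)) // u_k0 normr0.
have l_le1 := stoch_eigen_norm_le1 P_ge0 P_row1 u_eigen k0_max u_k0.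
have l_norm1 := stoch_eigen_norm1 P_ge0 P_row1 u_eigen k0_max u_k0 P_conn P_ss.
by rewrite lt_neqAle l_le1 andbT; apply: contra l_neq1 => /eqP/l_norm1 ->.
Qed.

Lemma stoch_simple_dominant (R : rcfType) (N : nat) (P : 'M[R]_N) (s : 'I_N) :
  (forall i j, 0 <= P i j) -> (forall i, \sum_j P i j = 1) -> 0 < P s s ->
  (forall k, connect (mxpos_rel P) k s) ->
  one_simple_dominant P.
Proof.
move=> P_ge0 P_row1 P_ss P_conn.
have root_lt1 := stoch_root_lt1 P_ge0 P_row1 P_ss P_conn.
case: N => [|N] in P s P_ge0 P_row1 P_ss P_conn root_lt1 *; first by case: s P_ss P_conn.
have [q char_P q1] := stoch_char_poly_factor P_ge0 P_row1 P_conn.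
have char_cP : char_poly (cmx P) = ('X - 1) * map_poly (fun x => x%:C%C) q.
  by rewrite -map_char_poly char_P rmorphM rmorphB /= map_polyX rmorph1.
have cq1 : ~~ root (map_poly (fun x => x%:C%C) q) 1.
  by rewrite -(rmorph1 (real_complex R)) fmorph_root.
rewrite /one_simple_dominant !eigenvalue_root_char; split; last split.
- by rewrite char_cP rootM root_XsubC eqxx.
- by rewrite char_cP mupMl // -polyC1 -[_ - _]expr1 mup_XsubCX eqxx.
- by move=> l; rewrite eigenvalue_root_char; apply: root_lt1.
Qed.

Lemma one_simple_dominant_char_poly (R : rcfType) (m : nat) (A B : 'M[R]_m) :
  char_poly A = char_poly B -> one_simple_dominant B -> one_simple_dominant A.
Proof.
move=> char_AB.
have eig_AB l : eigenvalue (cmx A) l = eigenvalue (cmx B) l.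
  by rewrite !eigenvalue_root_char -!map_char_poly char_AB.
move=> [B1 [B_mup B_lt1]]; split; first by rewrite eig_AB.
split; first by rewrite -map_char_poly char_AB map_char_poly.
by move=> l; rewrite eig_AB; apply: B_lt1.
Qed.

(* With [D = diag v], the matrix [D^-1 M D] is row-stochastic and has the same
   sign pattern as [M]. *)
Lemma perron_simple_dominant (R : rcfType) (N : nat) (M : 'M[R]_N) (v : 'cV[R]_N)
    (s : 'I_N) :
  (forall i j, 0 <= M i j) -> (forall i, 0 < v i 0) -> M *m v = v -> 0 < M s s ->
  (forall k, connect (mxpos_rel M) k s) ->
  one_simple_dominant M.
Proof.
move=> M_ge0 v_gt0 Mv M_ss M_conn.
pose D : 'M[R]_N := diag_mx v^T.
pose P : 'M[R]_N := \matrix_(i, j) ((v i 0)^-1 * M i j * v j 0).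
have D_unit : D \in unitmx.
  by rewrite unitmxE det_diag unitfE; apply/prodf_neq0 => i _; rewrite mxE gt_eqF.
have DP : D *m P = M *m D.
  rewrite mul_diag_mx mul_mx_diag; apply/matrixP => i j; rewrite !mxE.
  by rewrite !mulrA mulfV ?mul1r // gt_eqF.
apply: (one_simple_dominant_char_poly (B := P)).
  by rewrite -[in RHS](mulKmx D_unit P) DP mulmxA char_poly_conj.
have P_pos a b : (0 < P a b) = (0 < M a b).
  by rewrite mxE pmulr_lgt0 // pmulr_rgt0 // invr_gt0.
apply: (stoch_simple_dominant (s := s)).
- by move=> i j; rewrite mxE !mulr_ge0 // ltW ?invr_gt0.
- move=> i; have := congr1 (fun w : 'cV_N => w i 0) Mv; rewrite mxE => Mv_i.
  under eq_bigr do rewrite mxE -mulrA.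
  by rewrite -mulr_sumr Mv_i mulVf // gt_eqF.
- by rewrite P_pos.
- by move=> k; rewrite (eq_connect (e' := mxpos_rel M)).
Qed.

(** * The Perron vector of an irreducible column-stochastic matrix *)

Section ColumnStochastic.

Variables (R : realFieldType) (N : nat) (Q : 'M[R]_N).
Hypotheses (Q_ge0 : forall a c, 0 <= Q a c) (Q_col1 : forall c, \sum_a Q a c = 1).

Lemma colstoch_fixed_neq0 (a0 : 'I_N) : exists2 u : 'cV[R]_N, Q *m u = u & u != 0.
Proof.
have ones_neq0 : const_mx 1 != 0 :> 'rV[R]_N.
  by apply/eqP => /rowP/(_ a0)/eqP; rewrite !mxE oner_eq0.
have ones_Q : const_mx 1 *m Q = const_mx 1 :> 'rV[R]_N.
  apply/rowP => c; rewrite [RHS]mxE -[RHS](Q_col1 c) mxE.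
  by apply: eq_bigr => a _; rewrite mxE mul1r.
have /det0P[u u_neq0 uQ] : \det (Q - 1%:M)^T == 0.
  by rewrite det_tr; apply/det0P; exists (const_mx 1); rewrite // mulmxBr mulmx1 ones_Q subrr.
exists u^T; last by rewrite trmx_eq0.
apply/eqP; rewrite -subr_eq0 -{2}[u^T]mul1mx -mulmxBl.
by rewrite -[Q - _]trmxK -trmx_mul uQ trmx0.
Qed.

Lemma colstoch_norm_fixed (u : 'cV[R]_N) :
  Q *m u = u -> Q *m map_mx Num.norm u = map_mx Num.norm u.
Proof.
move=> Qu; set f := map_mx Num.norm u.
have f_sub a : f a 0 <= (Q *m f) a 0.
  have := congr1 (fun w : 'cV_N => w a 0) Qu; rewrite !mxE => Qu_a.
  rewrite -[X in `|X|]Qu_a (le_trans (ler_norm_sum _ _ _)) //.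
  by apply: ler_sum => c _; rewrite normrM ger0_norm // mxE.
have gap_ge0 a : true -> 0 <= (Q *m f) a 0 - f a 0 by rewrite subr_ge0.
have gap0 : \sum_a ((Q *m f) a 0 - f a 0) = 0.
  rewrite sumrB (eq_bigr (fun a => \sum_c Q a c * f c 0)) => [|a _]; last by rewrite mxE.
  rewrite exchange_big /= (eq_bigr (fun c => f c 0)) ?subrr // => c _.
  by rewrite -mulr_suml Q_col1 mul1r.
apply/colP => a; apply/eqP; rewrite -subr_eq0; apply/eqP.
exact: (psumr_eq0P gap_ge0 gap0 (i := a)).
Qed.

Lemma nonneg_fixed_gt0 (v : 'cV[R]_N) :
  (forall x y, connect (mxpos_rel Q) x y) -> Q *m v = v ->
  (forall a, 0 <= v a 0) -> v != 0 -> forall a, 0 < v a 0.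
Proof.
move=> Q_conn Qv v_ge0 v_neq0 a.
have [z v_z] : exists z, v z 0 != 0.
  apply/existsP; apply: contraNT v_neq0 => /existsPn v0.
  by apply/eqP/colP => z; rewrite mxE; move: (v0 z); rewrite negbK => /eqP.
have zero_step x y : mxpos_rel Q x y -> v x 0 == 0 -> v y 0 == 0.
  move=> Q_xy /eqP v_x; have := congr1 (fun w : 'cV_N => w x 0) Qv.
  rewrite mxE v_x => Qv_x.
  have term_ge0 c : true -> 0 <= Q x c * v c 0 by rewrite mulr_ge0.
  by move: (psumr_eq0P term_ge0 Qv_x (i := y) isT) => /eqP; rewrite mulf_eq0 gt_eqF.
rewrite lt_def v_ge0 andbT; apply: contra v_z.
exact: connect_preserves zero_step _ _ (Q_conn a z).
Qed.

Lemma colstoch_perron_vector (a0 : 'I_N) : (forall x y, connect (mxpos_rel Q) x y) ->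
  exists2 pi : 'cV[R]_N, Q *m pi = pi & forall a, 0 < pi a 0.
Proof.
move=> Q_conn; have [u Qu u_neq0] := colstoch_fixed_neq0 a0.
have Q_norm_u := colstoch_norm_fixed Qu.
exists (map_mx Num.norm u) => //; apply: nonneg_fixed_gt0 => // [a|].
  by rewrite mxE.
apply: contra u_neq0 => /eqP/colP norm_u0; apply/eqP/colP => a.
by have /eqP := norm_u0 a; rewrite !mxE normr_eq0 => /eqP.
Qed.

End ColumnStochastic.

(** * Weighted edge sums of Kronecker products *)

Local Notation idx a b := (mxtens_index (a, b)).

Lemma tensmx_colE (R : pzRingType) (n : nat) (X Y : 'cV[R]_n) (a b : 'I_n)
    (k : 'I_(1 * 1)) :
  (X *t Y) (idx a b) k = X a 0 * Y b 0.
Proof. by rewrite mxE mxtens_indexK /= !ord1. Qed.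

Lemma tensmxZl (R : comPzRingType) (m n p q : nat) (c : R) (X : 'M[R]_(m, n))
    (Y : 'M[R]_(p, q)) :
  (c *: X) *t Y = c *: (X *t Y).
Proof. by apply/matrixP => u v; rewrite !mxE mulrA. Qed.

Lemma tensmx_suml (R : comPzRingType) (m n p q : nat) (I : Type) (r : seq I)
    (P : pred I) (F : I -> 'M[R]_(m, n)) (Y : 'M[R]_(p, q)) :
  (\sum_(k <- r | P k) F k) *t Y = \sum_(k <- r | P k) F k *t Y.
Proof.
apply/matrixP => u v; case: (mxtens_indexP u) => a b; case: (mxtens_indexP v) => c d.
by rewrite tensmxE !summxE mulr_suml; apply: eq_bigr => k _; rewrite tensmxE.
Qed.

Definition tens_swap (n : nat) (u : 'I_(n * n)) : 'I_(n * n) :=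
  idx (mxtens_unindex u).2 (mxtens_unindex u).1.

Lemma tens_swapE (n : nat) (a b : 'I_n) : tens_swap (idx a b) = idx b a.
Proof. by rewrite /tens_swap mxtens_indexK. Qed.

Lemma tens_swapK (n : nat) : involutive (@tens_swap n).
Proof. by move=> u; case: (mxtens_indexP u) => a b; rewrite !tens_swapE. Qed.

Lemma char_poly_perm_conj (R : fieldType) (n : nat) (s : {perm 'I_n}) (A : 'M[R]_n) :
  char_poly (col_perm s (row_perm s A)) = char_poly A.
Proof.
have V_unit : perm_mx (s^-1)%g \in unitmx := unitmx_perm R _.
have s_inv : perm_mx s = invmx (perm_mx (s^-1)%g) :> 'M[R]_n.
  by rewrite -[LHS]mulmx1 -(mulmxV V_unit) mulmxA -perm_mxM mulgV perm_mx1 mul1mx.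
by rewrite col_permE row_permE s_inv char_poly_conj.
Qed.

Section EdgeSum.

Variables (R : comPzRingType) (n : nat) (E : rel 'I_n) (p : 'I_n -> 'I_n -> R).

Definition edge_sum (m1 m2 : nat) (M : 'I_n -> 'I_n -> 'M[R]_(m1, m2)) : 'M[R]_(m1, m2) :=
  \sum_(j < n) \sum_(i < n | E j i) p i j *: M j i.

Lemma edge_sumE m1 m2 (M : 'I_n -> 'I_n -> 'M[R]_(m1, m2)) a c :
  edge_sum M a c = \sum_(j < n) \sum_(i < n | E j i) p i j * M j i a c.
Proof.
rewrite summxE; apply: eq_bigr => j _; rewrite summxE.
by apply: eq_bigr => i _; rewrite mxE.
Qed.

Lemma edge_sum_mulmx m1 m2 k (M : 'I_n -> 'I_n -> 'M[R]_(m1, m2)) (X : 'M[R]_(m2, k)) :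
  edge_sum M *m X = edge_sum (fun j i => M j i *m X).
Proof.
rewrite mulmx_suml; apply: eq_bigr => j _; rewrite mulmx_suml.
by apply: eq_bigr => i _; rewrite -scalemxAl.
Qed.

Lemma edge_sum_fixed m k (M : 'I_n -> 'I_n -> 'M[R]_m) (X : 'M[R]_(m, k)) :
  \sum_(j < n) \sum_(i < n | E j i) p i j = 1 ->
  (forall j i, E j i -> M j i *m X = X) -> edge_sum M *m X = X.
Proof.
move=> p_sum1 MX; rewrite edge_sum_mulmx -[RHS]scale1r -p_sum1 scaler_suml.
apply: eq_bigr => j _; rewrite scaler_suml.
by apply: eq_bigr => i E_ji; rewrite MX.
Qed.

Lemma edge_sum_tr m1 m2 (M : 'I_n -> 'I_n -> 'M[R]_(m1, m2)) :
  (edge_sum M)^T = edge_sum (fun j i => (M j i)^T).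
Proof.
apply/matrixP => a c; rewrite mxE !edge_sumE.
by apply: eq_bigr => j _; apply: eq_bigr => i _; rewrite mxE.
Qed.

Lemma edge_sum_tensl m1 m2 k l (M : 'I_n -> 'I_n -> 'M[R]_(m1, m2)) (Y : 'M[R]_(k, l)) :
  edge_sum (fun j i => M j i *t Y) = edge_sum M *t Y.
Proof.
rewrite /edge_sum tensmx_suml; apply: eq_bigr => j _; rewrite tensmx_suml.
by apply: eq_bigr => i _; rewrite tensmxZl.
Qed.

End EdgeSum.

Section EdgeSumSign.

Variables (R : realFieldType) (n m : nat) (E : rel 'I_n) (p : 'I_n -> 'I_n -> R).
Variable M : 'I_n -> 'I_n -> 'M[R]_m.
Hypotheses (p_ge0 : forall j i, E j i -> 0 <= p i j)
  (M_ge0 : forall j i a c, E j i -> 0 <= M j i a c).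

Lemma edge_sum_ge0 a c : 0 <= edge_sum E p M a c.
Proof.
rewrite edge_sumE; apply: sumr_ge0 => j _; apply: sumr_ge0 => i E_ji.
by rewrite mulr_ge0 ?p_ge0 ?M_ge0.
Qed.

Lemma edge_sum_gt0 j i a c :
  E j i -> 0 < p i j -> 0 < M j i a c -> 0 < edge_sum E p M a c.
Proof.
move=> E_ji p_gt0 M_gt0; rewrite edge_sumE (bigD1 j) //= (bigD1 i) //= -addrA.
rewrite ltr_pwDl ?mulr_gt0 // addr_ge0 //.
  by apply: sumr_ge0 => i' /andP[E_ji' _]; rewrite mulr_ge0 ?p_ge0 ?M_ge0.
apply: sumr_ge0 => j' _; apply: sumr_ge0 => i' E_ji'.
by rewrite mulr_ge0 ?p_ge0 ?M_ge0.
Qed.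

End EdgeSumSign.

Lemma edge_sum_tens_swap (R : fieldType) (n : nat) (E : rel 'I_n) p
    (A B : 'I_n -> 'I_n -> 'M[R]_n) :
  char_poly (edge_sum E p (fun j i => B j i *t A j i)) =
  char_poly (edge_sum E p (fun j i => A j i *t B j i)).
Proof.
rewrite -[RHS](char_poly_perm_conj (perm (inv_inj (@tens_swapK n)))); apply: congr1.
apply/matrixP => u v; case: (mxtens_indexP u) => a b; case: (mxtens_indexP v) => c d.
rewrite !mxE !permE !tens_swapE !edge_sumE.
by apply: eq_bigr => j _; apply: eq_bigr => i _; rewrite !tensmxE [A _ _ _ _ * _]mulrC.
Qed.

(* Irreducibility is checked along a strongly connected relation [e]: a step [x -> y]
   of [e] moves the first coordinate of a pair [(x, b)] with [b != x] while [B] stays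
   on its diagonal, or both coordinates of [(x, x)] at once. *)
Lemma tens_edge_sum_simple_dominant (R : rcfType) (n : nat) (E : rel 'I_n) p
    (A B : 'I_n -> 'I_n -> 'M[R]_n) (e : rel 'I_n) (X Y : 'cV[R]_n) (t : 'I_n) :
  (forall j i, E j i -> 0 < p i j) ->
  (forall j i a c, E j i -> 0 <= A j i a c) ->
  (forall j i a c, E j i -> 0 <= B j i a c) ->
  (forall a, 0 < X a 0) -> (forall a, 0 < Y a 0) ->
  edge_sum E p (fun j i => A j i *t B j i) *m (X *t Y) = X *t Y ->
  (exists j i, [/\ E j i, 0 < A j i t t & 0 < B j i t t]) ->
  (forall x y, connect e x y) ->
  (forall x y, e x y -> exists j i, [/\ E j i, 0 < A j i x y, 0 < B j i x y
                                      & forall b, b != x -> 0 < B j i b b]) ->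
  one_simple_dominant (edge_sum E p (fun j i => A j i *t B j i)).
Proof.
move=> p_gt0 A_ge0 B_ge0 X_gt0 Y_gt0 fixed t_loop e_conn e_step.
have p_ge0 j i : E j i -> 0 <= p i j by move/p_gt0/ltW.
have AB_ge0 j i u v : E j i -> 0 <= (A j i *t B j i) u v.
  move=> E_ji; case: (mxtens_indexP u) => a b; case: (mxtens_indexP v) => c d.
  by rewrite tensmxE mulr_ge0 ?A_ge0 ?B_ge0.
have AB_gt0 j i a b c d : E j i -> 0 < A j i a c -> 0 < B j i b d ->
    mxpos_rel (edge_sum E p (fun j i => A j i *t B j i)) (idx a b) (idx c d).
  move=> E_ji A_gt0 B_gt0; apply: (edge_sum_gt0 p_ge0 AB_ge0 E_ji); first exact: p_gt0.
  by rewrite /= tensmxE mulr_gt0.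
apply: (perron_simple_dominant (v := X *t Y) (s := idx t t)) => //.
- exact: edge_sum_ge0.
- by move=> u; case: (mxtens_indexP u) => a b; rewrite tensmx_colE mulr_gt0.
- by case: t_loop => j [i [E_ji A_tt B_tt]]; apply: AB_gt0 E_ji A_tt B_tt.
move=> u; case: (mxtens_indexP u) => a b.
apply: (connect_pairs (pr := fun x y => idx x y) t e_conn) => [x y b' | x y].
  move=> /e_step[j [i [E_ji A_xy _ B_diag]]] x_b'.
  by apply: AB_gt0 E_ji A_xy (B_diag _ _); rewrite eq_sym.
by move=> /e_step[j [i [E_ji A_xy B_xy _]]]; apply: AB_gt0 E_ji A_xy B_xy.
Qed.

Lemma eq_edge_sum (R : comPzRingType) (n m1 m2 : nat) (E : rel 'I_n) p
    (M M' : 'I_n -> 'I_n -> 'M[R]_(m1, m2)) :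
  (forall j i, E j i -> M j i = M' j i) -> edge_sum E p M = edge_sum E p M'.
Proof.
by move=> eqM; apply: eq_bigr => j _; apply: eq_bigr => i /eqM ->.
Qed.

Lemma edge_sum_tens_mul_fixedr (R : comPzRingType) (n : nat) (E : rel 'I_n) p
    (A B : 'I_n -> 'I_n -> 'M[R]_n) (X Y : 'cV[R]_n) :
  (forall j i, E j i -> B j i *m Y = Y) ->
  edge_sum E p (fun j i => A j i *t B j i) *m (X *t Y) = (edge_sum E p A *m X) *t Y.
Proof.
move=> BY; rewrite !edge_sum_mulmx -edge_sum_tensl.
by apply: eq_edge_sum => j i E_ji; rewrite tensmx_mul BY.
Qed.

(** * The matrices I - L_ji and S_ji *)

Lemma delta_mx_mul_ones (R : pzRingType) (n : nat) (i j : 'I_n) :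
  delta_mx i j *m const_mx 1 = delta_mx i 0 :> 'cV[R]_n.
Proof.
apply/colP => a; rewrite !mxE (bigD1 j) //= big1 => [|c /negPf c_j].
  by rewrite !mxE eqxx andbT mulr1 addr0.
by rewrite !mxE c_j andbF mul0r.
Qed.

Lemma IL_mul_ones (R : comPzRingType) (n : nat) (w : 'I_n -> 'I_n -> R) (j i : 'I_n) :
  (1%:M - Lmx w j i) *m const_mx 1 = const_mx 1 :> 'cV[R]_n.
Proof.
by rewrite mulmxBl mul1mx /Lmx mulmxBl -!scalemxAl !delta_mx_mul_ones subrr subr0.
Qed.

Lemma Smx_tr_mul_ones (R : pzRingType) (n : nat) (j i : 'I_n) :
  (Smx R j i)^T *m const_mx 1 = const_mx 1 :> 'cV[R]_n.
Proof.
have -> : (Smx R j i)^T = 1%:M - (delta_mx j j - delta_mx j i).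
  by apply/matrixP => a c; rewrite !mxE [c == a]eq_sym andbC [(c == i) && _]andbC.
by rewrite mulmxBl mul1mx mulmxBl !delta_mx_mul_ones subrr subr0.
Qed.

Lemma Smx_col_sum (R : pzRingType) (n : nat) (j i c : 'I_n) : \sum_a Smx R j i a c = 1.
Proof.
have := congr1 (fun v : 'cV_n => v c 0) (Smx_tr_mul_ones R j i); rewrite !mxE => <-.
by apply: eq_bigr => a _; rewrite !mxE mulr1.
Qed.

Lemma IL_entry (R : pzRingType) (n : nat) (w : 'I_n -> 'I_n -> R) (j i a c : 'I_n) :
  (1%:M - Lmx w j i) a c =
  (a == c)%:R - w i j * ((a == i) && (c == i))%:R + w i j * ((a == i) && (c == j))%:R.
Proof. by rewrite /Lmx !mxE opprD opprK addrA. Qed.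

Lemma Smx_entry (R : pzRingType) (n : nat) (j i a c : 'I_n) :
  Smx R j i a c = (a == c)%:R - ((a == j) && (c == j))%:R + ((a == i) && (c == j))%:R.
Proof. by rewrite /Smx !mxE opprD opprK addrA. Qed.

Section EdgeEntries.

Variables (R : realFieldType) (n : nat) (w : 'I_n -> 'I_n -> R) (j i : 'I_n).
Hypotheses (i_neq_j : i != j) (w_range : 0 < w i j < 1).

Lemma IL_ge0 a c : 0 <= (1%:M - Lmx w j i) a c.
Proof.
case/andP: w_range => w_gt0 w_lt1; rewrite IL_entry.
have [->|a_i] := eqVneq a i; last by rewrite !mulr0 subr0 addr0 ler0n.
have [->|c_i] := eqVneq c i; first by rewrite (negPf i_neq_j) mulr1 mulr0 addr0 subr_ge0 ltW.
have [_|c_j] := eqVneq c j; last by rewrite !mulr0 subr0 addr0 ler0n.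
by rewrite mulr0 subr0 add0r mulr1 ltW.
Qed.

Lemma IL_diag_gt0 a : 0 < (1%:M - Lmx w j i) a a.
Proof.
case/andP: w_range => _ w_lt1; rewrite IL_entry eqxx.
have [->|a_i] := eqVneq a i; last by rewrite !mulr0 subr0 addr0 ltr01.
by rewrite (negPf i_neq_j) mulr1 mulr0 addr0 subr_gt0.
Qed.

Lemma IL_edge_gt0 : 0 < (1%:M - Lmx w j i) i j.
Proof.
case/andP: w_range => w_gt0 _; rewrite IL_entry !eqxx (negPf i_neq_j) eq_sym (negPf i_neq_j).
by rewrite mulr0 subr0 add0r mulr1.
Qed.

End EdgeEntries.

Lemma Smx_ge0 (R : realFieldType) (n : nat) (j i a c : 'I_n) : 0 <= Smx R j i a c.
Proof.
rewrite Smx_entry; have [->|c_j] := eqVneq c j.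
  by rewrite !andbT subrr add0r ler0n.
by rewrite !andbF subr0 addr0 ler0n.
Qed.

Lemma Smx_diag (R : pzRingType) (n : nat) (j i a : 'I_n) : a != j -> Smx R j i a a = 1.
Proof. by move=> a_j; rewrite Smx_entry eqxx (negPf a_j) /= andbF subr0 addr0. Qed.

Lemma Smx_edge (R : pzRingType) (n : nat) (j i : 'I_n) : i != j -> Smx R j i i j = 1.
Proof. by move=> i_j; rewrite Smx_entry (negPf i_j) !eqxx /= subrr add0r. Qed.

Section EdgeTensorSums.

Variables (R : rcfType) (n : nat) (E : rel 'I_n) (p w : 'I_n -> 'I_n -> R).
Hypotheses (E_irrefl : forall i, ~~ E i i)
  (p_gt0 : forall j i, E j i -> 0 < p i j)
  (p_sum1 : \sum_(j < n) \sum_(i < n | E j i) p i j = 1)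
  (w_range : forall j i, E j i -> 0 < w i j < 1)
  (E_conn : strongly_connected E).

Local Notation IL j i := (1%:M - Lmx w j i).
Local Notation S j i := (Smx R j i).
Local Notation ones := (const_mx 1 : 'cV[R]_n).

Let p_ge0 j i : E j i -> 0 <= p i j. Proof. by move/p_gt0/ltW. Qed.

Let edge_neq j i : E j i -> i != j.
Proof. by apply: contraTneq => ->; apply: E_irrefl. Qed.

Let edge_IL_ge0 j i a c : E j i -> 0 <= IL j i a c.
Proof. by move=> E_ji; apply: IL_ge0; [apply: edge_neq | apply: w_range]. Qed.

Let edge_IL_diag_gt0 j i a : E j i -> 0 < IL j i a a.
Proof. by move=> E_ji; apply: IL_diag_gt0; [apply: edge_neq | apply: w_range]. Qed.

Let edge_IL_gt0 j i : E j i -> 0 < IL j i i j.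
Proof. by move=> E_ji; apply: IL_edge_gt0; [apply: edge_neq | apply: w_range]. Qed.

Let rev_conn x y : connect [rel x y | E y x] x y.
Proof. exact: etrans (connect_rev E x y) (E_conn y x). Qed.

Let some_edge : exists j i, E j i.
Proof.
have [[j i] /= E_ji | no_edge] := pickP (fun ji : 'I_n * 'I_n => E ji.1 ji.2).
  by exists j, i.
move: p_sum1; rewrite big1 => [/eqP|j _]; first by rewrite eq_sym oner_eq0.
by rewrite big_pred0 // => i; apply: (no_edge (j, i)).
Qed.

Lemma S_sum_perron_vector :
  exists2 pi : 'cV[R]_n, edge_sum E p (fun j i => S j i) *m pi = pi & forall a, 0 < pi a 0.
Proof.
have [j0 [i0 _]] := some_edge.
have S_ge0 j i a c : E j i -> 0 <= S j i a c by move=> _; apply: Smx_ge0.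
apply: (colstoch_perron_vector _ _ i0) => [a c | c | x y].
- exact: edge_sum_ge0.
- rewrite -p_sum1 (eq_bigr _ (fun a _ => edge_sumE _ _ _ a c)) exchange_big /=.
  apply: eq_bigr => j _; rewrite exchange_big /=; apply: eq_bigr => i _.
  by rewrite -mulr_sumr Smx_col_sum mulr1.
apply: connect_sub (rev_conn x y) => {}x {}y /= E_yx; apply: connect1.
apply: (edge_sum_gt0 p_ge0 S_ge0 E_yx); first exact: p_gt0.
by rewrite Smx_edge ?ltr01 ?edge_neq.
Qed.

Let ones_gt0 a : 0 < ones a 0. Proof. by rewrite mxE ltr01. Qed.

Lemma IL_IL_simple_dominant :
  one_simple_dominant (edge_sum E p (fun j i => IL j i *t IL j i)).
Proof.
have [j0 [i0 E0]] := some_edge.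
apply: (tens_edge_sum_simple_dominant (e := [rel x y | E y x]) (t := i0)) => //.
- rewrite edge_sum_tens_mul_fixedr => [|j i _]; last exact: IL_mul_ones.
  by rewrite edge_sum_fixed // => j i _; apply: IL_mul_ones.
- by exists j0, i0; split; rewrite ?edge_IL_diag_gt0.
move=> x y /= E_yx; exists y, x; split; rewrite ?edge_IL_gt0 //.
by move=> b _; apply: edge_IL_diag_gt0.
Qed.

Lemma S_IL_simple_dominant :
  one_simple_dominant (edge_sum E p (fun j i => S j i *t IL j i)).
Proof.
have [j0 [i0 E0]] := some_edge.
have [pi S_pi pi_gt0] := S_sum_perron_vector.
apply: (tens_edge_sum_simple_dominant (e := [rel x y | E y x]) (X := pi) (t := i0)) => //.
- by move=> j i a c _; apply: Smx_ge0.
- by rewrite edge_sum_tens_mul_fixedr ?S_pi // => j i _; apply: IL_mul_ones.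
- by exists j0, i0; split; rewrite ?edge_IL_diag_gt0 ?Smx_diag ?ltr01 ?edge_neq.
move=> x y /= E_yx; exists y, x; split=> //; last by move=> b _; apply: edge_IL_diag_gt0.
  by rewrite Smx_edge ?ltr01 // edge_neq.
exact: edge_IL_gt0.
Qed.

Lemma IL_S_simple_dominant :
  one_simple_dominant (edge_sum E p (fun j i => IL j i *t S j i)).
Proof.
exact: one_simple_dominant_char_poly (edge_sum_tens_swap _ _ _ _) S_IL_simple_dominant.
Qed.

(* The transposed factors [S^T] fix [ones] and move along the edges of [E] forwards. *)
Lemma S_S_simple_dominant :
  one_simple_dominant (edge_sum E p (fun j i => S j i *t S j i)).
Proof.
have [j0 [i0 E0]] := some_edge.
apply: (@one_simple_dominant_char_poly _ _ _
          (edge_sum E p (fun j i => (S j i)^T *t (S j i)^T))).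
  rewrite -char_poly_trmx edge_sum_tr; apply: congr1.
  by apply: eq_edge_sum => j i _; rewrite trmx_tens.
have ST_entry j i a c : (S j i)^T a c = S j i c a by rewrite mxE.
have ST_ge0 j i a c : E j i -> 0 <= (S j i)^T a c by rewrite ST_entry Smx_ge0.
apply: (tens_edge_sum_simple_dominant (e := E) (t := i0)) => //.
- by rewrite edge_sum_tens_mul_fixedr ?edge_sum_fixed // => j i _; apply: Smx_tr_mul_ones.
- by exists j0, i0; rewrite ST_entry Smx_diag ?ltr01 // edge_neq.
move=> x y E_xy; exists x, y; rewrite !ST_entry Smx_edge ?ltr01 ?edge_neq //.
by split=> // b b_x; rewrite ST_entry Smx_diag ?ltr01.
Qed.

End EdgeTensorSums.

Theorem lemma6 (R : rcfType) (n : nat) (E : rel 'I_n)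
    (p w : 'I_n -> 'I_n -> R) :
  (1 < n)%N ->
  (forall i : 'I_n, ~~ E i i) ->
  (forall j i : 'I_n, E j i -> 0 < p i j < 1) ->
  \sum_(j < n) \sum_(i < n | E j i) p i j = 1 ->
  (forall j i : 'I_n, E j i -> 0 < w i j < 1) ->
  strongly_connected E ->
  let IL j i := 1%:M - Lmx w j i in
  [/\ one_simple_dominant (\sum_(j < n) \sum_(i < n | E j i)
                              p i j *: (IL j i *t IL j i)),
      one_simple_dominant (\sum_(j < n) \sum_(i < n | E j i)
                              p i j *: (IL j i *t Smx R j i)),
      one_simple_dominant (\sum_(j < n) \sum_(i < n | E j i)
                              p i j *: (Smx R j i *t IL j i))
    & one_simple_dominant (\sum_(j < n) \sum_(i < n | E j i)
                              p i j *: (Smx R j i *t Smx R j i))].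
Proof.
move=> _ E_irrefl p_range p_sum1 w_range E_conn IL.
have p_gt0 j i : E j i -> 0 < p i j by case/p_range/andP.
split.
- exact: (IL_IL_simple_dominant E_irrefl p_gt0 p_sum1 w_range E_conn).
- exact: (IL_S_simple_dominant E_irrefl p_gt0 p_sum1 w_range E_conn).
- exact: (S_IL_simple_dominant E_irrefl p_gt0 p_sum1 w_range E_conn).
- exact: (S_S_simple_dominant E_irrefl p_gt0 p_sum1 E_conn).
Qed.
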